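(* Let $P$ be a finite partial IP loop such that $3\mid o_3(P)$, $\#P\equiv 4\pmod 6$ and $\Gamma(P)\subseteq O_2(P)\times O_2(P)$, and let $G(P)$ be its gap graph. Then (a) every vertex of $G(P)$ has even degree, and (b) the number of edges of $G(P)$ is divisible by $3$.
   Context: A partial IP loop is a set $P$ with a partial binary operation $(x,y)\mapsto xy$ defined on a subset $D(P)\subseteq P\times P$ (the domain) such that: (1) there is $1\in P$ with $(1,x),(x,1)\in D(P)$ and $1x=x1=x$ for all $x\in P$; (2) for each $x\in P$ there is a unique $y\in P$, denoted $x^{-1}$, with $(x,y),(y,x)\in D(P)$ and $xy=yx=1$; (3) whenever $(x,y)\in D(P)$, we have $(x^{-1},xy),(xy,y^{-1})\in D(P)$ and $x^{-1}(xy)=y$, $(xy)y^{-1}=x$. The set of gaps is $\Gamma(P)=(P\times P)\setminus D(P)$. $O_2(P)=\{x\in P: (x,x)\in D(P),\ x\ne 1,\ xx=1\}$; $O_3(P)=\{x\in P: (x,x)\in D(P),\ (x,xx)\in D(P),\ x\neq 1,\ x(xx)=1\}$ and $o_3(P)=\#O_3(P)$. When $\Gamma(P)\subseteq O_2(P)\times O_2(P)$ (so $\Gamma(P)$ is irreflexive and symmetric), the gap graph $G(P)$ is the simple undirected graph whose vertices are the $x\in O_2(P)$ with $(x,y)\in\Gamma(P)$ for some $y$, and whose edges are the sets $\{x,y\}$ with $(x,y)\in\Gamma(P)$. *)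

(* A partial binary operation on a finite carrier T is
   encoded as mul : T -> T -> option T; (x,y) is in the domain D(P)
   iff mul x y <> None, and then xy is the value. *)
From mathcomp Require Import all_boot.
Set Implicit Arguments. Unset Strict Implicit. Unset Printing Implicit Defensive.

Section PartialIPLoop.
Variable T : finType.
Variable mul : T -> T -> option T.
Variable e : T.

Definition is_inv (x y : T) : Prop := mul x y = Some e /\ mul y x = Some e.

Definition partial_IP_loop : Prop :=
  (forall x, mul e x = Some x /\ mul x e = Some x) /\
  (forall x, exists! y, is_inv x y) /\
  (forall x y z xi yi, mul x y = Some z -> is_inv x xi -> is_inv y yi ->
     mul xi z = Some y /\ mul z yi = Some x).

Definition gap (x y : T) : bool := mul x y == None.

Definition O2 : {set T} := [set x | (mul x x == Some e) && (x != e)].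

Definition O3 : {set T} :=
  [set x | (if mul x x is Some s then mul x s == Some e else false) && (x != e)].

Definition o3 : nat := #|O3|.

Definition gap_vertices : {set T} := [set x in O2 | [exists y, gap x y]].
Definition gap_edges : {set {set T}} :=
  [set [set p.1; p.2] | p in [set p : T * T | gap p.1 p.2]].
Definition gap_degree (x : T) : nat := #|[set E in gap_edges | x \in E]|.

End PartialIPLoop.

From mathcomp Require Import all_boot.
From mathcomp Require Import zify.
Set Implicit Arguments. Unset Strict Implicit. Unset Printing Implicit Defensive.

(* Both parts are counting arguments modulo a prime, using fixed-point-free
   maps of prime order on finite sets: an involution without fixed points
   forces even cardinality, a map of order 3 without fixed points forces
   cardinality divisible by 3.
   (a) For x in O2 we have x^-1 = x, so y |-> xy is a fixed-point-free
       involution of the non-neighbours of x; as #P is even, the number of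
       neighbours of x (its degree) is even.
   (b) On the domain D(P) the map (x,y) |-> (y,(xy)^-1) has order 3; its
       fixed points are the (x,x) with xx = x^-1, i.e. x = 1 or x in O3.
       Hence #D(P) = 1 + o3 = 1 (mod 3).  Since gaps are symmetric and
       irreflexive, #Gamma(P) = 2 * #edges, and #P^2 = 1 (mod 3) gives
       2 * #edges = 0 (mod 3). *)

Lemma involution_card_even (U : finType) (f : U -> U) (A : {set U}) :
  {in A, forall a, f a \in A} -> {in A, involutive f} ->
  {in A, forall a, f a != a} -> ~~ odd #|A|.
Proof.
move: {2}#|A| (leqnn #|A|) => n; elim: n A => [|n IH] A.
  by rewrite leqn0 => /eqP ->.
move=> le_An fA fK fP.
have [-> | [a Aa]] := set_0Vmem A; first by rewrite cards0.
pose S := [set a; f a].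
have sSA : S \subset A.
  by apply/subsetP=> b; rewrite !inE => /orP[]/eqP->; [|exact: fA].
have cardS : #|S| = 2 by rewrite cards2 eq_sym fP.
have cardA := cardsID S A; rewrite (setIidPr sSA) cardS in cardA.
have notS b : b \in A :\: S -> [/\ b \in A, b != a & b != f a].
  by rewrite !inE negb_or => /andP[/andP[]].
suff : ~~ odd #|A :\: S| by rewrite -cardA oddD.
apply: IH; first by lia.
- move=> b /notS[Ab ba bfa]; rewrite !inE negb_or fA // andbT.
  apply/andP; split; first by apply: contra bfa => /eqP <-; rewrite fK.
  by apply: contra ba => /eqP/(congr1 f); rewrite !fK // => ->.
- by move=> b /notS[Ab _ _]; apply: fK.
- by move=> b /notS[Ab _ _]; apply: fP.
Qed.

Lemma order3_card_dvd3 (U : finType) (f : U -> U) (A : {set U}) :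
  {in A, forall a, f a \in A} -> {in A, forall a, f (f (f a)) = a} ->
  {in A, forall a, f a != a} -> (3 %| #|A|)%N.
Proof.
move: {2}#|A| (leqnn #|A|) => n; elim: n A => [|n IH] A.
  by rewrite leqn0 => /eqP ->.
move=> le_An fA f3 fP.
have [-> | [a Aa]] := set_0Vmem A; first by rewrite cards0.
have fa_a : f a != a := fP a Aa.
have ffa_fa : f (f a) != f a := fP _ (fA _ Aa).
have ffa_a : f (f a) != a by apply: contra fa_a => /eqP E; rewrite -{1}E f3.
pose S := [set a; f a; f (f a)].
have sSA : S \subset A.
  apply/subsetP=> b; rewrite !inE => /orP[/orP[]|]/eqP->; rewrite ?fA //.
have cardS : #|S| = 3.
  rewrite /S -setUA cardsU1 cards2 !inE negb_or !(eq_sym a) fa_a ffa_a.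
  by rewrite eq_sym ffa_fa.
have cardA := cardsID S A; rewrite (setIidPr sSA) cardS in cardA.
have notS b : b \in A :\: S -> [/\ b \in A, b != a, b != f a & b != f (f a)].
  by rewrite !inE !negb_or => /andP[/andP[/andP[]]].
suff : (3 %| #|A :\: S|)%N by rewrite -cardA dvdn_addr.
have f2 b c : b \in A -> c \in A -> f b = c -> b = f (f c).
  by move=> Ab Ac <-; rewrite f3.
apply: IH; first by lia.
- move=> b /notS[Ab ba bfa bffa]; rewrite !inE !negb_or fA // andbT.
  apply/andP; split; first (apply/andP; split).
  + by apply: contra bffa => /eqP <-; rewrite f3.
  + by apply: contra ba => /eqP /(f2 _ _ Ab (fA _ Aa)) ->; rewrite f3.
  + apply: contra bfa => /eqP /(f2 _ _ Ab (fA _ (fA _ Aa))) ->.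
    by rewrite f3 ?fA.
- by move=> b /notS[Ab _ _ _]; apply: f3.
- by move=> b /notS[Ab _ _ _]; apply: fP.
Qed.

Section SimpleGraph.
Variables (T : finType) (r : rel T).
Hypotheses (r_sym : symmetric r) (r_irr : irreflexive r).

Definition edge_set : {set {set T}} :=
  [set [set p.1; p.2] | p in [set p : T * T | r p.1 p.2]].

Lemma r_neq x y : r x y -> x != y.
Proof. by apply: contraTneq => ->; rewrite r_irr. Qed.

Lemma card_incident_edges x :
  #|[set E in edge_set | x \in E]| = #|[set y | r x y]|.
Proof.
have -> : [set E in edge_set | x \in E] = (fun y => [set x; y]) @: [set y | r x y].
  apply/setP=> E; rewrite inE; apply/andP/imsetP.
  - case=> /imsetP [[a b]]; rewrite inE /= => rab ->.
    move=> /set2P[] ->; first by exists b; rewrite ?inE.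
    by exists a; rewrite ?inE 1?r_sym // setUC.
  - case=> y; rewrite inE => rxy ->; split; last by rewrite !inE eqxx.
    by apply/imsetP; exists (x, y); rewrite ?inE.
apply: card_in_imset => y1 y2; rewrite !inE => /r_neq xy1 /r_neq xy2 /setP E.
by have := E y1; rewrite !inE eqxx orbT eq_sym (negbTE xy1) => /esym/eqP.
Qed.

(* Each edge {a, b} comes from exactly the two ordered pairs (a, b), (b, a). *)
Lemma card_arcs : #|[set p : T * T | r p.1 p.2]| = 2 * #|edge_set|.
Proof.
rewrite mulnC -sum1_card (partition_big_imset (fun p : T * T => [set p.1; p.2])).
rewrite -sum_nat_const; apply: eq_bigr => E /imsetP[[a b]]; rewrite inE /= => rab ->.
have ab : (a, b) != (b, a).
  by apply: contraTneq rab => -[->]; rewrite r_irr.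
rewrite sum1dep_card; have := cards2 (a, b) (b, a); rewrite ab => <-.
apply: eq_card => -[c d]; rewrite !inE /=.
apply/andP/orP => [[rcd /eqP cd_ab] | [] /eqP [-> ->] //]; last first.
  by rewrite r_sym setUC.
have c_ab : c \in [set a; b] by rewrite -cd_ab !inE eqxx.
have d_ab : d \in [set a; b] by rewrite -cd_ab !inE eqxx orbT.
move: c_ab d_ab (r_neq rcd); rewrite !inE.
by case/orP=> /eqP-> /orP[]/eqP->; rewrite ?eqxx //; [left | right].
Qed.

End SimpleGraph.

Section PartialIPLoop.
Variables (T : finType) (mul : T -> T -> option T) (e : T).
Hypothesis loopP : partial_IP_loop mul e.

Definition loop_inv (x : T) : T :=
  odflt e [pick y | (mul x y == Some e) && (mul y x == Some e)].

Lemma loop_invP x : is_inv mul e x (loop_inv x).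
Proof.
rewrite /loop_inv; case: pickP => [y /andP[/eqP ? /eqP ?] | none] //=.
have [y [[xy yx] _]] := loopP.2.1 x.
by move: (none y); rewrite xy yx !eqxx.
Qed.

Lemma loop_inv_unique x y : is_inv mul e x y -> y = loop_inv x.
Proof.
have [w [_ uniq_w]] := loopP.2.1 x.
by move=> xy; rewrite -(uniq_w _ xy) -(uniq_w _ (loop_invP x)).
Qed.

Lemma loop_invK x : loop_inv (loop_inv x) = x.
Proof. by have [h1 h2] := loop_invP x; rewrite -(loop_inv_unique (conj h2 h1)). Qed.

Lemma mul_cancel x y z : mul x y = Some z ->
  mul (loop_inv x) z = Some y /\ mul z (loop_inv y) = Some x.
Proof. by move=> xy; apply: loopP.2.2 xy (loop_invP x) (loop_invP y). Qed.

Lemma mul_rotate x y z : mul x y = Some z ->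
  mul y (loop_inv z) = Some (loop_inv x).
Proof. by move=> /mul_cancel[/mul_cancel[]]. Qed.

Lemma mul_inv_anti x y z : mul x y = Some z ->
  mul (loop_inv y) (loop_inv x) = Some (loop_inv z).
Proof. by move=> /mul_rotate/mul_cancel[]. Qed.

Lemma loop_inv_O2 x : x \in O2 mul e -> loop_inv x = x.
Proof. by rewrite inE => /andP[/eqP xx _]; rewrite -(loop_inv_unique (conj xx xx)). Qed.

Lemma square_invE x :
  (mul x x == Some (loop_inv x)) = (x \in e |: O3 mul e).
Proof.
have [ee _] := loopP.1 e.
rewrite !inE; have [-> | xe] := eqVneq x e.
  by rewrite -(loop_inv_unique (conj ee ee)) ee eqxx.
rewrite andbT; case xx: (mul x x) => [s|] //=; apply/eqP/eqP => [[->] | xs].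
  exact: (loop_invP x).1.
have [xis _] := mul_cancel xs; have [_ xie] := loopP.1 (loop_inv x).
by rewrite xie in xis; case: xis => ->.
Qed.

Definition loop_domain : {set T * T} := [set p | mul p.1 p.2 != None].

Definition loop_rotation (p : T * T) : T * T :=
  if mul p.1 p.2 is Some z then (p.2, loop_inv z) else p.

(* The rotation maps D(P) to itself and has order 3 there:
   (x, y) |-> (y, z^-1) |-> (z^-1, x) |-> (x, y), where z = xy. *)
Lemma loop_rotation_order3 p : p \in loop_domain ->
  loop_rotation p \in loop_domain /\
  loop_rotation (loop_rotation (loop_rotation p)) = p.
Proof.
case: p => x y; rewrite inE /loop_rotation /=.
case xy: (mul x y) => [z|] // _; have yzi := mul_rotate xy.
have zix : mul (loop_inv z) x = Some (loop_inv y).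
  by have := mul_rotate yzi; rewrite loop_invK.
by rewrite inE /= yzi /= loop_invK zix loop_invK.
Qed.

Lemma loop_rotation_fixed :
  [set p in loop_domain | loop_rotation p == p] = (fun x => (x, x)) @: (e |: O3 mul e).
Proof.
apply/setP=> -[x y]; rewrite !inE /loop_rotation /=; apply/andP/imsetP.
- case xy: (mul x y) => [z|] [] // _ /eqP[yx zi]; subst y.
  by exists x; rewrite // -square_invE xy -zi loop_invK.
- case=> w; rewrite -square_invE => /eqP ww [-> ->].
  by rewrite ww loop_invK.
Qed.

Lemma card_loop_domain_mod3 : #|loop_domain| = 1 + o3 mul e %[mod 3].
Proof.
set F := [set p in loop_domain | loop_rotation p == p].
have cardF : #|F| = 1 + o3 mul e.
  rewrite /F loop_rotation_fixed card_imset; last by move=> a b [].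
  by rewrite cardsU1 inE eqxx andbF.
have rot3 : (3 %| #|loop_domain :\: F|)%N.
  apply: (order3_card_dvd3 (f := loop_rotation)) => p /setDP[pD pF];
    have [rpD rp3] := loop_rotation_order3 pD.
  - apply/setDP; split=> //; apply: contra pF; move: pD.
    rewrite /F !inE => -> /andP[_ /eqP rp] /=.
    by rewrite -[X in _ == X]rp3 !rp.
  - exact: rp3.
  - by apply: contra pF => rp; move: pD; rewrite /F !inE => ->.
have := cardsID F loop_domain; rewrite (setIidPr _); last first.
  by apply/subsetP=> p; rewrite inE => /andP[].
by move=> <-; rewrite cardF -modnDmr (eqP rot3) addn0.
Qed.

End PartialIPLoop.

Section GapGraph.
Variables (T : finType) (mul : T -> T -> option T) (e : T).
Hypothesis loopP : partial_IP_loop mul e.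
Hypothesis gaps_O2 :
  forall x y, gap mul x y -> (x \in O2 mul e) && (y \in O2 mul e).

(* Gaps are symmetric: if yx were defined, x^-1 y^-1 = xy would be too. *)
Lemma gap_sym : symmetric (gap mul).
Proof.
suff gapC x y : gap mul x y -> gap mul y x.
  by move=> x y; apply/idP/idP => /gapC.
move=> g; have /andP[xO2 yO2] := gaps_O2 g; apply: contraLR g.
rewrite /gap; case yx: (mul y x) => [z|] // _.
by rewrite -(loop_inv_O2 loopP xO2) -(loop_inv_O2 loopP yO2) (mul_inv_anti loopP yx).
Qed.

(* Gaps are irreflexive, since xx = 1 is defined for x in O2. *)
Lemma gap_irr : irreflexive (gap mul).
Proof.
move=> x; apply/negP=> g; have /andP[+ _] := gaps_O2 g.
by rewrite inE /gap => /andP[/eqP xx _]; rewrite /gap xx in g.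
Qed.

(* For x in O2, y |-> xy is a fixed-point-free involution of the
   non-neighbours of x, because x^-1 = x and x <> 1. *)
Lemma card_nongap_even x :
  x \in O2 mul e -> ~~ odd #|~: [set y | gap mul x y]|.
Proof.
move=> xO2; have xinv := loop_inv_O2 loopP xO2.
have xe : x != e by move: xO2; rewrite inE => /andP[].
pose f y := if mul x y is Some z then z else y.
have fK y : mul x y != None -> mul x (f y) = Some y.
  by rewrite /f; case xy: (mul x y) => [z|] // _; rewrite -xinv (mul_cancel loopP xy).1.
apply: (involution_card_even (f := f)) => y; rewrite !inE /gap => xy.
- by rewrite fK.
- by have := fK _ xy; rewrite /f => ->.
- apply: contra xe; rewrite /f; case xyz: (mul x y) xy => [z|] // _ /eqP zy.
  subst z; have [_ xye] := mul_cancel loopP xyz.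
  by move: xye; rewrite (loop_invP loopP y).1 => -[->].
Qed.

Lemma gap_degree_even x :
  ~~ odd #|T| -> x \in O2 mul e -> ~~ odd (gap_degree mul x).
Proof.
move=> evenT xO2; rewrite /gap_degree (card_incident_edges gap_sym gap_irr).
move: evenT; rewrite -(cardsC [set y | gap mul x y]) oddD.
by rewrite (negbTE (card_nongap_even xO2)) addbF.
Qed.

(* Part (b): counting D(P) and the gaps, #P^2 = #D(P) + 2 * #edges. *)
Lemma gap_edges_dvd3 :
  #|T| = 1 %[mod 3] -> (3 %| o3 mul e)%N -> (3 %| #|gap_edges mul|)%N.
Proof.
move=> T1 o3_3.
have cardT2 : #|loop_domain mul| + 2 * #|gap_edges mul| = #|T| * #|T|.
  rewrite -(card_arcs gap_sym gap_irr) -card_prod -(cardsC (loop_domain mul)).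
  by congr (_ + _); apply: eq_card => p; rewrite !inE /gap negbK.
have D1 := card_loop_domain_mod3 loopP.
have T2 : #|T| * #|T| = 1 %[mod 3] by rewrite -modnMm T1.
move: cardT2 D1 T2 o3_3.
move: #|loop_domain mul| #|gap_edges mul| (o3 mul e) (#|T| * #|T|) => d n o t2.
lia.
Qed.

End GapGraph.

Theorem claim3 (T : finType) (mul : T -> T -> option T) (e : T) :
  partial_IP_loop mul e ->
  (3 %| o3 mul e)%N ->
  (#|T| %% 6 = 4)%N ->
  (forall x y, gap mul x y -> (x \in O2 mul e) && (y \in O2 mul e)) ->
  (forall x, x \in gap_vertices mul e -> ~~ odd (gap_degree mul x)) /\
  (3 %| #|gap_edges mul|)%N.
Proof.
move=> loopP o3_3 T4 gaps_O2; split.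
- have evenT : ~~ odd #|T| by rewrite (divn_eq #|T| 6) T4 oddD oddM andbF.
  by move=> x /setIdP[xO2 _]; apply: (gap_degree_even loopP gaps_O2).
- have T1 : #|T| = 1 %[mod 3] by rewrite -(modn_dvdm _ (isT : 3 %| 6)) T4.
  exact: (gap_edges_dvd3 loopP gaps_O2).
Qed.
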